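(* Let $\mathcal X$ be a linear Abelian category over a field $\mathbb F$ and let $L\subseteq\mathbb Z$ be any subset. Then the category of tempered $L$-persistence objects in $\mathcal X$ is Krull–Schmidt.
   Context: An additive category is linear over $\mathbb F$ if each Hom-set is a finite-dimensional $\mathbb F$-vector space and composition is bilinear. For $L\subseteq\mathbb Z$, an $L$-persistence object in $\mathcal X$ is a family of objects $(X_p)_{p\in\mathbb Z}$ together with, for each $p$, a morphism $X_p\to X_{p-1}$ if $p\in L$ and a morphism $X_{p-1}\to X_p$ if $p\notin L$. A morphism of $L$-persistence objects is a family of morphisms $f_p:X_p\to X'_p$ making all resulting squares commute. It is tempered if all but finitely many of its arrows are isomorphisms. An object is indecomposable if it is nonzero and not isomorphic to a direct sum of two nonzero objects. A ring is local if $1\ne0$ and for each $f$, if $f$ is not invertible then $1-f$ is invertible. An additive category is Krull–Schmidt if every object is isomorphic to a finite direct sum of indecomposables and every indecomposable has a local endomorphism ring. *)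

From HB Require Import structures.
From mathcomp Require Import all_boot all_order all_algebra.
Set Implicit Arguments. Unset Strict Implicit. Unset Printing Implicit Defensive.
Import Order.TTheory GRing.Theory Num.Theory.
Local Open Scope ring_scope.

Record PreaddData := {
  pob : Type;
  phom : pob -> pob -> Type;
  pcomp : forall A B C, phom B C -> phom A B -> phom A C;
  pid : forall A, phom A A;
  padd : forall A B, phom A B -> phom A B -> phom A B;
  pzero : forall A B, phom A B;
  popp : forall A B, phom A B -> phom A B }.
Arguments pcomp {p A B C}.
Arguments pid {p}.
Arguments padd {p A B}.
Arguments pzero {p A B}.
Arguments popp {p A B}.

Section KS.
Variable C : PreaddData.
Local Notation ob := (pob C).
Local Notation hom := (@phom C).

Definition is_iso (A B : ob) (f : hom A B) : Prop :=
  exists g : hom B A, pcomp g f = pid A /\ pcomp f g = pid B.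

Definition isomorphic (A B : ob) : Prop := exists f : hom A B, is_iso f.

Definition is_zero_ob (Z : ob) : Prop :=
  forall B, (forall f g : hom Z B, f = g) /\ (forall f g : hom B Z, f = g).

Definition is_biprod (A B Y : ob) : Prop :=
  exists (i1 : hom A Y) (i2 : hom B Y) (p1 : hom Y A) (p2 : hom Y B),
    [/\ pcomp p1 i1 = pid A, pcomp p2 i2 = pid B,
        pcomp p1 i2 = pzero, pcomp p2 i1 = pzero
      & padd (pcomp i1 p1) (pcomp i2 p2) = pid Y].

Definition is_direct_sum (n : nat) (A : 'I_n -> ob) (Y : ob) : Prop :=
  exists (i : forall k, hom (A k) Y) (p : forall k, hom Y (A k)),
    [/\ forall k, pcomp (p k) (i k) = pid (A k),
        forall j k, j != k -> pcomp (p j) (i k) = pzero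
      & \big[@padd C Y Y/pzero]_(k < n) pcomp (i k) (p k) = pid Y].

Definition indecomposable (X : ob) : Prop :=
  ~ is_zero_ob X /\
  ~ (exists A B Y, [/\ ~ is_zero_ob A, ~ is_zero_ob B, is_biprod A B Y
                     & isomorphic X Y]).

Definition end_unit (X : ob) (f : hom X X) : Prop :=
  exists g : hom X X, pcomp f g = pid X /\ pcomp g f = pid X.

Definition local_end (X : ob) : Prop :=
  pid X <> pzero /\
  forall f : hom X X, ~ end_unit f -> end_unit (padd (pid X) (popp f)).

Definition KrullSchmidt : Prop :=
  (forall X : ob, exists (n : nat) (A : 'I_n -> ob),
      (forall k, indecomposable (A k)) /\
      exists Y, is_direct_sum A Y /\ isomorphic X Y) /\
  (forall X : ob, indecomposable X -> local_end X).
End KS.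

Record LinCat (F : fieldType) := {
  cob : Type;
  chom : cob -> cob -> vectType F;    (* finite-dimensional F-spaces *)
  ccomp : forall A B C, chom B C -> chom A B -> chom A C;
  cid : forall A, chom A A;
  ccompA : forall A B C D (f : chom C D) (g : chom B C) (h : chom A B),
      ccomp f (ccomp g h) = ccomp (ccomp f g) h;
  ccomp1m : forall A B (f : chom A B), ccomp (cid B) f = f;
  ccompm1 : forall A B (f : chom A B), ccomp f (cid A) = f;
  ccompDl : forall A B C (a : F) (f g : chom B C) (h : chom A B),
      ccomp (a *: f + g) h = a *: ccomp f h + ccomp g h;
  ccompDr : forall A B C (a : F) (h : chom B C) (f g : chom A B),
      ccomp h (a *: f + g) = a *: ccomp h f + ccomp h g }.
Arguments cob {F}.
Arguments chom {F l}.
Arguments ccomp {F l A B C}.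
Arguments cid {F l}.

Section Abelian.
Variables (F : fieldType) (X : LinCat F).
Local Notation ob := (cob X).
Local Notation hom := (@chom F X).

Definition czero_ob (Z : ob) : Prop :=
  forall B, (forall f g : hom Z B, f = g) /\ (forall f g : hom B Z, f = g).

Definition is_kernel (A B K : ob) (f : hom A B) (k : hom K A) : Prop :=
  ccomp f k = 0 /\
  forall W (g : hom W A), ccomp f g = 0 -> exists! u : hom W K, ccomp k u = g.

Definition is_cokernel (A B Q : ob) (f : hom A B) (q : hom B Q) : Prop :=
  ccomp q f = 0 /\
  forall W (g : hom B W), ccomp g f = 0 -> exists! u : hom Q W, ccomp u q = g.

Definition monic (A B : ob) (f : hom A B) : Prop :=
  forall W (g h : hom W A), ccomp f g = ccomp f h -> g = h.

Definition epic (A B : ob) (f : hom A B) : Prop :=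
  forall W (g h : hom B W), ccomp g f = ccomp h f -> g = h.

Definition abelian : Prop :=
  (exists Z, czero_ob Z) /\ [/\
      (forall A B, exists (Y : ob) (i1 : hom A Y) (i2 : hom B Y)
                     (p1 : hom Y A) (p2 : hom Y B),
          [/\ ccomp p1 i1 = cid A, ccomp p2 i2 = cid B,
              ccomp p1 i2 = 0, ccomp p2 i1 = 0
            & ccomp i1 p1 + ccomp i2 p2 = cid Y]),
      (forall A B (f : hom A B), exists K (k : hom K A), is_kernel f k),
      (forall A B (f : hom A B), exists Q (q : hom B Q), is_cokernel f q),
      (forall A B (f : hom A B), monic f ->
          exists C (g : hom B C), is_kernel g f)
    & (forall A B (f : hom A B), epic f ->
          exists C (g : hom C A), is_cokernel g f)].

Lemma ccompDl1 A B C (f g : hom B C) (h : hom A B) :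
  ccomp (f + g) h = ccomp f h + ccomp g h.
Proof. by have := ccompDl 1 f g h; rewrite !scale1r. Qed.

Lemma ccompDr1 A B C (h : hom B C) (f g : hom A B) :
  ccomp h (f + g) = ccomp h f + ccomp h g.
Proof. by have := ccompDr 1 h f g; rewrite !scale1r. Qed.

Lemma ccomp0l A B C (h : hom A B) : ccomp (0 : hom B C) h = 0.
Proof.
have E := ccompDl1 (0 : hom B C) 0 h; rewrite addr0 in E.
by apply: (addrI (ccomp (0 : hom B C) h)); rewrite addr0 -E.
Qed.

Lemma ccomp0r A B C (h : hom B C) : ccomp h (0 : hom A B) = 0.
Proof.
have E := ccompDr1 h (0 : hom A B) 0; rewrite addr0 in E.
by apply: (addrI (ccomp h (0 : hom A B))); rewrite addr0 -E.
Qed.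

Lemma ccompNl A B C (f : hom B C) (h : hom A B) : ccomp (- f) h = - ccomp f h.
Proof.
apply/eqP; rewrite -subr_eq0 opprK -ccompDl1 addNr; exact/eqP/ccomp0l.
Qed.

Lemma ccompNr A B C (h : hom B C) (f : hom A B) : ccomp h (- f) = - ccomp h f.
Proof.
apply/eqP; rewrite -subr_eq0 opprK -ccompDr1 addNr; exact/eqP/ccomp0r.
Qed.
End Abelian.

(* L ⊆ ℤ is given by its (classical) indicator L : int -> bool.        *)
Section Persistence.
Variables (F : fieldType) (X : LinCat F) (L : int -> bool).
Local Notation ob := (cob X).
Local Notation hom := (@chom F X).

(* type of the p-th structure arrow: X_p -> X_(p-1) if p ∈ L, else X_(p-1) -> X_p *)
Definition arrT (Y : int -> ob) (p : int) (b : bool) : Type :=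
  if b then hom (Y p) (Y (p - 1)) else hom (Y (p - 1)) (Y p).

Record pers_obj := PersObj {
  px : int -> ob;
  parr : forall p : int, arrT px p (L p) }.

Definition cis_iso (A B : ob) (f : hom A B) : Prop :=
  exists g : hom B A, ccomp g f = cid A /\ ccomp f g = cid B.

Definition arr_is_iso (Y : int -> ob) (p : int) (b : bool) : arrT Y p b -> Prop :=
  if b as b return arrT Y p b -> Prop
  then fun a : hom (Y p) (Y (p - 1)) => cis_iso a
  else fun a : hom (Y (p - 1)) (Y p) => cis_iso a.

Definition tempered (Y : pers_obj) : Prop :=
  exists s : seq int, forall p, p \notin s -> arr_is_iso (parr Y p).

Definition square (Y Z : pers_obj) (f : forall p, hom (px Y p) (px Z p))
    (p : int) (b : bool) : arrT (px Y) p b -> arrT (px Z) p b -> Prop :=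
  if b as b return arrT (px Y) p b -> arrT (px Z) p b -> Prop
  then fun (a : hom (px Y p) (px Y (p - 1))) (a' : hom (px Z p) (px Z (p - 1))) =>
         ccomp a' (f p) = ccomp (f (p - 1)) a
  else fun (a : hom (px Y (p - 1)) (px Y p)) (a' : hom (px Z (p - 1)) (px Z p)) =>
         ccomp a' (f (p - 1)) = ccomp (f p) a.

Definition commutes (Y Z : pers_obj) (f : forall p, hom (px Y p) (px Z p)) :=
  forall p, square f (parr Y p) (parr Z p).

Definition tobj := {Y : pers_obj | tempered Y}.

Definition thom (Y Z : tobj) :=
  {f : forall p, hom (px (sval Y) p) (px (sval Z) p) | commutes f}.

Lemma commutes_comp (Y Z W : pers_obj) f g :
  commutes (Y := Z) (Z := W) g -> commutes (Y := Y) (Z := Z) f ->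
  commutes (Y := Y) (Z := W) (fun p => ccomp (g p) (f p)).
Proof.
move=> hg hf p; move: (hg p) (hf p); rewrite /square.
move: (parr Y p) (parr Z p) (parr W p); case: (L p) => a b c /= H1 H2.
- by rewrite ccompA H1 -ccompA H2 ccompA.
- by rewrite ccompA H1 -ccompA H2 ccompA.
Qed.

Lemma commutes_id (Y : pers_obj) : commutes (Y := Y) (Z := Y) (fun p => cid _).
Proof.
move=> p; rewrite /square; move: (parr Y p); case: (L p) => a /=;
by rewrite ccomp1m ccompm1.
Qed.

Lemma commutes_add (Y Z : pers_obj) f g :
  commutes (Y := Y) (Z := Z) f -> commutes (Y := Y) (Z := Z) g ->
  commutes (Y := Y) (Z := Z) (fun p => f p + g p).
Proof.
move=> hf hg p; move: (hf p) (hg p); rewrite /square.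
move: (parr Y p) (parr Z p); case: (L p) => a b /= H1 H2;
by rewrite ccompDr1 ccompDl1 H1 H2.
Qed.

Lemma commutes_zero (Y Z : pers_obj) :
  commutes (Y := Y) (Z := Z) (fun p => 0).
Proof.
move=> p; rewrite /square; move: (parr Y p) (parr Z p); case: (L p) => a b /=;
by rewrite ccomp0l ccomp0r.
Qed.

Lemma commutes_opp (Y Z : pers_obj) f :
  commutes (Y := Y) (Z := Z) f -> commutes (Y := Y) (Z := Z) (fun p => - f p).
Proof.
move=> hf p; move: (hf p); rewrite /square.
move: (parr Y p) (parr Z p); case: (L p) => a b /= H;
by rewrite ccompNr ccompNl H.
Qed.

Definition tcomp (A B C : tobj) (g : thom B C) (f : thom A B) : thom A C :=
  exist _ _ (commutes_comp (proj2_sig g) (proj2_sig f)).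
Definition tid (A : tobj) : thom A A := exist _ _ (commutes_id (sval A)).
Definition tadd (A B : tobj) (f g : thom A B) : thom A B :=
  exist _ _ (commutes_add (proj2_sig f) (proj2_sig g)).
Definition tzero (A B : tobj) : thom A B := exist _ _ (commutes_zero _ _).
Definition topp (A B : tobj) (f : thom A B) : thom A B :=
  exist _ _ (commutes_opp (proj2_sig f)).

Definition tempered_pers_cat : PreaddData :=
  {| pob := tobj; phom := thom; pcomp := tcomp; pid := tid;
     padd := tadd; pzero := tzero; popp := topp |}.
End Persistence.

(* A tempered persistence object Y has only finitely many non-invertible
   structure arrows, and an endomorphism of Y vanishing on a window containing
   all of them vanishes everywhere.  So End Y embeds linearly into a
   finite-dimensional space, and any D + 1 endomorphisms are linearly
   dependent.  Such a ring satisfies Fitting's lemma: f^k = f^(k+1) g with g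
   commuting with f.  Kernels in X split idempotents of Y, so for Y
   indecomposable the only idempotents of End Y are 0 and 1, and Fitting's
   lemma makes End Y local.  Complete families of nonzero orthogonal
   idempotents of End Y have at most D members, so refining one as long as
   some member is not primitive terminates and splits Y into finitely many
   indecomposable summands. *)

From HB Require Import structures.
From mathcomp Require Import all_boot all_order all_algebra.
From mathcomp Require boolp.
From mathcomp Require Import zify.
Set Implicit Arguments. Unset Strict Implicit. Unset Printing Implicit Defensive.
Import Order.TTheory GRing.Theory.
Local Open Scope ring_scope.

Section Idempotents.
Variable A : pzRingType.

Definition invertible (a : A) : Prop := exists b, a * b = 1 /\ b * a = 1.

Definition idempotent (e : A) : Prop := e * e = e.

Definition idem_decomposition m (e : 'I_m -> A) : Prop :=
  [/\ forall i, idempotent (e i), forall i, e i <> 0,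
      forall i j, i != j -> e i * e j = 0 & \sum_i e i = 1].

Definition primitive (e : A) : Prop :=
  forall a b, idempotent a -> idempotent b -> a * b = 0 -> b * a = 0 ->
    a + b = e -> a = 0 \/ b = 0.

Definition fitting_ring : Prop :=
  forall f : A, exists k (g : A), GRing.comm g f /\ f ^+ k = f ^+ k.+1 * g.

(* Fitting: [e := f^k g^k] is idempotent; [e = 0] makes [f] nilpotent and
   [e = 1] makes [f] invertible. *)
Lemma local_of_trivial_idempotents : fitting_ring ->
  (forall e, idempotent e -> e = 0 \/ e = 1) ->
  forall f, ~ invertible f -> invertible (1 - f).
Proof.
move=> fitA idem_trivial f f_not_unit.
have [k [g [gf fk]]] := fitA f.
have fkj j : f ^+ k = f ^+ (k + j) * g ^+ j.
  elim: j => [|j IH]; first by rewrite addn0 expr0 mulr1.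
  rewrite IH addnC exprD fk mulrA -exprD -mulrA -exprS.
  by have -> : (j + k.+1 = k + j.+1)%N by lia.
have cfg : GRing.comm f g := commr_sym gf.
have fk_gk j : GRing.comm (f ^+ k) (g ^+ j).
  by apply/commrX/commr_sym/commrX.
pose e := f ^+ k * g ^+ k.
have fk_e : f ^+ k = f ^+ k * f ^+ k * g ^+ k by rewrite -exprD -fkj.
have e_idem : idempotent e.
  by rewrite /idempotent /e mulrA -[_ * g ^+ k * _]mulrA -fk_gk mulrA -fk_e.
case: (idem_trivial e e_idem) => e_val.
  have fk0 : f ^+ k = 0 by rewrite fk_e -mulrA -/e e_val mulr0.
  pose S := \sum_(i < k) f ^+ i.
  have cS : GRing.comm f S by apply: commr_sum => i _; apply/commrX.
  have lS : (1 - f) * S = 1 by rewrite -opprB mulNr -subrX1 fk0 sub0r opprK.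
  exists S; split => //.
  by rewrite mulrBr mulrBl mulr1 mul1r cS in lS *.
exfalso; apply: f_not_unit; exists (f ^+ k * g ^+ k.+1).
have inv_r : f * (f ^+ k * g ^+ k.+1) = 1.
  by rewrite mulrA -exprS [g ^+ k.+1]exprS mulrA -fk -/e e_val.
split => //.
by rewrite -(commrM (commrX k (commr_refl f)) (commrX k.+1 cfg)).
Qed.

Lemma not_primitiveP (e : A) : ~ primitive e ->
  exists a b, [/\ idempotent a, idempotent b, a * b = 0, b * a = 0 &
               [/\ a + b = e, a <> 0 & b <> 0]].
Proof.
move=> not_prim; apply: boolp.contrapT => no_split; apply: not_prim.
move=> a b aa bb ab ba abe; apply: boolp.contrapT => /boolp.not_orP [a0 b0].
by apply: no_split; exists a, b.
Qed.

Lemma refine_idem_decomposition m (e : 'I_m -> A) (i : 'I_m) :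
  idem_decomposition e -> ~ primitive (e i) ->
  exists e' : 'I_m.+1 -> A, idem_decomposition e'.
Proof.
move=> [e_idem e_neq0 e_orth e_sum].
move=> /not_primitiveP [a [b [aa bb ab ba [abe a0 b0]]]].
have ae : a * e i = a by rewrite -abe mulrDr aa ab addr0.
have ea : e i * a = a by rewrite -abe mulrDl aa ba addr0.
have be : b * e i = b by rewrite -abe mulrDr bb ba add0r.
have eb : e i * b = b by rewrite -abe mulrDl bb ab add0r.
pose e' j := if unlift ord_max j is Some j' then
   (if j' == i then a else e j') else b.
have e'L j : e' (lift ord_max j) = if j == i then a else e j by rewrite /e' liftK.
have e'M : e' ord_max = b by rewrite /e' unlift_none.
exists e'; split.
- move=> j; case: (unliftP ord_max j) => [j' ->|->]; rewrite ?e'L ?e'M //.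
  by case: eqP.
- move=> j; case: (unliftP ord_max j) => [j' ->|->]; rewrite ?e'L ?e'M //.
  by case: eqP.
- move=> j k; case: (unliftP ord_max j) => [j' ->|->];
  case: (unliftP ord_max k) => [k' ->|->]; rewrite ?e'L ?e'M ?eqxx //.
  + rewrite (inj_eq (@lift_inj _ ord_max)) => jk.
    case: (eqVneq j' i) => [ji|ji]; case: (eqVneq k' i) => [ki|ki].
    * by rewrite ji ki eqxx in jk.
    * by rewrite -ae -mulrA e_orth ?mulr0 // eq_sym.
    * by rewrite -ea mulrA e_orth ?mul0r.
    * exact: e_orth.
  + move=> _; case: (eqVneq j' i) => [ji|ji] //.
    by rewrite -eb mulrA e_orth ?mul0r.
  + move=> _; case: (eqVneq k' i) => [ki|ki] //.
    by rewrite -be -mulrA e_orth ?mulr0 // eq_sym.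
- rewrite big_ord_recr /= e'M.
  have widen_lift j : widen_ord (leqnSn m) j = lift ord_max j.
    exact/val_inj/esym/lift_max.
  under eq_bigr => j _ do rewrite widen_lift e'L.
  rewrite (bigD1 i) //= eqxx.
  under eq_bigr => j /negbTE ji do rewrite ji.
  by rewrite -e_sum [RHS](bigD1 i) //= -abe addrAC.
Qed.

Definition idem_decomposition_bounded (D : nat) : Prop :=
  forall m (e : 'I_m -> A), idem_decomposition e -> (m <= D)%N.

Lemma exists_primitive_decomposition D : idem_decomposition_bounded D ->
  (1 : A) <> 0 ->
  exists m (e : 'I_m -> A), idem_decomposition e /\ forall i, primitive (e i).
Proof.
move=> boundD nz1.
suff refine t m (e : 'I_m -> A) : (D - m <= t)%N -> idem_decomposition e ->
    exists m (e : 'I_m -> A), idem_decomposition e /\ forall i, primitive (e i).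
  apply: (refine D 1%N (fun=> 1)); first exact: leq_subr.
  split=> //; first by move=> i; rewrite /idempotent mul1r.
  - by move=> i j; rewrite !ord1 eqxx.
  - by rewrite big_ord1.
elim: t m e => [|t IH] m e Dm de.
all: have [e_prim|] := boolp.pselect (forall i, primitive (e i));
  first by exists m, e.
all: move=> /boolp.existsNP [i /(refine_idem_decomposition de) [e' de']].
- by have := boundD _ _ de'; lia.
- by apply: (IH m.+1 e') => //; lia.
Qed.
End Idempotents.

Definition dependence_bounded (F : fieldType) (V : lmodType F) (D : nat) : Prop :=
  forall m (w : 'I_m -> V), (D < m)%N ->
    exists2 c : 'I_m -> F, exists i, c i != 0 & \sum_i c i *: w i = 0.

(* [algType] requires a nontrivial ring and [End Y] may be zero, so the scalar
   action on a [pzRingType] is passed explicitly and installed on an alias. *)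
Section ScaledRing.
Variables (F : fieldType) (A : pzRingType) (scale : F -> A -> A).
Hypotheses (scaleA : forall a b v, scale a (scale b v) = scale (a * b) v)
  (scale1 : left_id 1 scale) (scaleDr : right_distributive scale +%R)
  (scaleDl : forall v, {morph scale^~ v : a b / a + b})
  (scaleAl : forall a u v, scale a (u * v) = scale a u * v)
  (scaleAr : forall a u v, scale a (u * v) = u * scale a v).

Definition scaled_ring : Type := A.
HB.instance Definition _ := GRing.PzRing.on scaled_ring.
HB.instance Definition _ :=
  GRing.Zmodule_isLmodule.Build F scaled_ring scaleA scale1 scaleDr scaleDl.

Let scaledAl a (u v : scaled_ring) : a *: (u * v) = (a *: u) * v.
Proof. exact: scaleAl. Qed.
Let scaledAr a (u v : scaled_ring) : a *: (u * v) = u * (a *: v).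
Proof. exact: scaleAr. Qed.

Variable D : nat.
Hypothesis depA : dependence_bounded scaled_ring D.

Lemma fitting_of_power_relation (f : scaled_ring) n (h : scaled_ring)
    (c : 'I_n -> F) :
  (exists i, c i != 0) -> \sum_(i < n) c i *: (h * f ^+ i) = 0 ->
  exists k (g : scaled_ring), GRing.comm g f /\ h * f ^+ k = h * f ^+ k.+1 * g.
Proof.
elim: n h c => [|n IH] h c; first by case=> [[]].
move=> [i ci_neq0]; rewrite big_ord_recl /= expr0 mulr1 => rel.
pose S := \sum_(j < n) c (lift ord0 j) *: f ^+ j.
have tail_rel : \sum_(j < n) c (lift ord0 j) *: (h * f ^+ bump 0 j) = (h * f) * S.
  rewrite mulr_sumr; apply: eq_bigr => j _.
  by rewrite -scaledAr /bump /= add1n exprS mulrA.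
have [c0|c0] := eqVneq (c ord0) 0.
  rewrite c0 scale0r add0r in rel.
  have [j cj_neq0] : exists j, c (lift ord0 j) != 0.
    move: ci_neq0; case: (unliftP ord0 i) => [j ->|->]; first by exists j.
    by rewrite c0 eqxx.
  have rel' : \sum_(j < n) c (lift ord0 j) *: ((h * f) * f ^+ j) = 0.
    by apply: etrans rel; apply: eq_bigr => l _; rewrite /bump /= add1n exprS mulrA.
  have [k [g [gf hk]]] := IH _ _ (ex_intro _ j cj_neq0) rel'.
  by exists k.+1, g; split => //; move: hk; rewrite !exprS !mulrA.
exists 0%N, (- (c ord0)^-1 *: S); split.
  rewrite /GRing.comm -scaledAl -scaledAr; congr (_ *: _).
  rewrite /S mulr_suml mulr_sumr; apply: eq_bigr => j _.
  by rewrite -scaledAl -scaledAr -exprSr exprS.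
rewrite expr0 expr1 mulr1 -scaledAr -tail_rel.
have -> : \sum_(j < n) c (lift ord0 j) *: (h * f ^+ bump 0 j) = - (c ord0 *: h).
  by apply/eqP; rewrite -subr_eq0 opprK addrC rel.
by rewrite scalerN scaleNr opprK scalerA mulVf // scale1r.
Qed.

Lemma fitting_of_dependence_bounded : fitting_ring A.
Proof.
move=> f; have [c nz rel] := depA (fun i : 'I_D.+1 => f ^+ i : scaled_ring) (ltnSn D).
have rel1 : \sum_i c i *: (1 * f ^+ i : scaled_ring) = 0.
  by apply: etrans rel; apply: eq_bigr => i _; rewrite mul1r.
by have [k [g [gf]]] := fitting_of_power_relation nz rel1; rewrite !mul1r; exists k, g.
Qed.

Lemma idem_decomposition_bounded_of_dependence :
  idem_decomposition_bounded A D.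
Proof.
move=> m e [e_idem e_neq0 e_orth _]; rewrite leqNgt.
apply/negP => /(@depA m e) [c [j cj] rel].
have : (e j : scaled_ring) * \sum_i c i *: (e i : scaled_ring) =
    c j *: (e j : scaled_ring).
  rewrite mulr_sumr (bigD1 j) //= -scaledAr e_idem big1 ?addr0 // => i ij.
  by rewrite -scaledAr e_orth ?scaler0 // eq_sym.
rewrite rel mulr0 => /esym /eqP; rewrite scaler_eq0 (negbTE cj) /= => /eqP.
exact: e_neq0.
Qed.
End ScaledRing.

Section LinearCategory.
Variables (F : fieldType) (X : LinCat F).

Lemma ccompZl (A B C : cob X) (c : F) (f : chom B C) (h : chom A B) :
  ccomp (c *: f) h = c *: ccomp f h.
Proof. by rewrite -[c *: f]addr0 ccompDl ccomp0l addr0. Qed.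
Lemma ccompZr (A B C : cob X) (c : F) (h : chom B C) (f : chom A B) :
  ccomp h (c *: f) = c *: ccomp h f.
Proof. by rewrite -[c *: f]addr0 ccompDr ccomp0r addr0. Qed.

Definition has_kernels : Prop :=
  forall (A B : cob X) (f : chom A B), exists K (k : chom K A), is_kernel f k.

Lemma split_idempotent_of_kernel : has_kernels ->
  forall (A : cob X) (e : chom A A), ccomp e e = e ->
  exists K (k : chom K A) (r : chom A K), ccomp r k = cid K /\ ccomp k r = e.
Proof.
move=> kerX A e ee; have [K [k [k_ker k_univ]]] := kerX _ _ (cid A - e).
have ek : ccomp e k = k.
  apply/eqP; rewrite eq_sym -subr_eq0 -[k in k - _]ccomp1m -ccompNl -ccompDl1.
  exact/eqP.
have : ccomp (cid A - e) e = 0 by rewrite ccompDl1 ccompNl ccomp1m ee subrr.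
case/k_univ => r [kr _]; exists K, k, r; split => //.
have [u [_ u_uniq]] := k_univ _ _ k_ker.
by rewrite -(u_uniq (ccomp r k)) ?(u_uniq (cid K)) ?ccompm1 // ccompA kr.
Qed.
End LinearCategory.

Section Retract.
Variables (F : fieldType) (X : LinCat F) (L : int -> bool) (Y : pers_obj X L).
Variables (e : forall q, chom (px Y q) (px Y q)) (K : int -> cob X).
Variables (k : forall q, chom (K q) (px Y q)) (r : forall q, chom (px Y q) (K q)).
Hypotheses (e_commutes : commutes e) (rk : forall q, ccomp (r q) (k q) = cid _)
  (kr : forall q, ccomp (k q) (r q) = e q).

Definition retract_arr q : arrT K q (L q) :=
  (match L q as b return arrT (px Y) q b -> arrT K q b with
   | true => fun a => ccomp (r (q - 1)) (ccomp a (k q))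
   | false => fun a => ccomp (r q) (ccomp a (k (q - 1))) end) (parr Y q).

Definition retract : pers_obj X L := PersObj retract_arr.

Let ek q W (x : chom (px Y q) W) : ccomp (ccomp x (e q)) (k q) = ccomp x (k q).
Proof. by rewrite -kr -!ccompA rk ccompm1. Qed.
Let re q : ccomp (r q) (e q) = r q.
Proof. by rewrite -kr ccompA rk ccomp1m. Qed.
Let krW q W (x : chom (px Y q) W) : ccomp (ccomp x (k q)) (r q) = ccomp x (e q).
Proof. by rewrite -ccompA kr. Qed.

Lemma commutes_retract_incl : commutes (Y := retract) (Z := Y) k.
Proof.
move=> q; move: (e_commutes q); rewrite /square /retract /retract_arr /=.
by move: (parr Y q); case: (L q) => a /= eq; rewrite !ccompA kr -eq ek.
Qed.

Lemma commutes_retract_proj : commutes (Y := Y) (Z := retract) r.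
Proof.
move=> q; move: (e_commutes q); rewrite /square /retract /retract_arr /=.
by move: (parr Y q); case: (L q) => a /= eq; rewrite -!ccompA kr eq ccompA re.
Qed.

Let cancel_inv (A B W : cob X) (f : chom A B) (g : chom B A) (x : chom A W) :
  ccomp g f = cid A -> ccomp (ccomp x g) f = x.
Proof. by move=> gf; rewrite -ccompA gf ccompm1. Qed.

Lemma retract_tempered : tempered Y -> tempered retract.
Proof.
case=> s iso_out; exists s => q /iso_out; move: (e_commutes q).
rewrite /arr_is_iso /square /retract /retract_arr /=.
move: (parr Y q); case: (L q) => a /= ea [b [ba ab]].
- have eaW W (x : chom _ W) : ccomp (ccomp x (e (q - 1))) a = ccomp (ccomp x a) (e q).
    by rewrite -!ccompA ea.
  exists (ccomp (r q) (ccomp b (k (q - 1)))); split; rewrite !ccompA krW.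
  + by rewrite eaW ek cancel_inv // rk.
  + by rewrite -eaW cancel_inv // ek rk.
- have eaW W (x : chom _ W) : ccomp (ccomp x (e q)) a = ccomp (ccomp x a) (e (q - 1)).
    by rewrite -!ccompA ea.
  exists (ccomp (r (q - 1)) (ccomp b (k q))); split; rewrite !ccompA krW.
  + by rewrite eaW ek cancel_inv // rk.
  + by rewrite -eaW cancel_inv // ek rk.
Qed.
End Retract.

Section TemperedCategory.
Variables (F : fieldType) (X : LinCat F) (L : int -> bool).
Local Notation tob := (tobj X L).
Local Notation hm := (@thom F X L).
Local Notation TC := (tempered_pers_cat X L).

Lemma thom_eq (Y Z : tob) (f g : hm Y Z) : (forall p, sval f p = sval g p) -> f = g.
Proof.
case: f g => [f hf] [g hg] /= fg.
exact/boolp.eq_exist/boolp.functional_extensionality_dep.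
Qed.

HB.instance Definition _ (Y Z : tob) := boolp.gen_eqMixin (hm Y Z).
HB.instance Definition _ (Y Z : tob) := boolp.gen_choiceMixin (hm Y Z).

Lemma taddA (Y Z : tob) : associative (@tadd F X L Y Z).
Proof. by move=> f g h; apply: thom_eq => p /=; rewrite addrA. Qed.
Lemma taddC (Y Z : tob) : commutative (@tadd F X L Y Z).
Proof. by move=> f g; apply: thom_eq => p /=; rewrite addrC. Qed.
Lemma tadd0 (Y Z : tob) : left_id (@tzero F X L Y Z) (@tadd F X L Y Z).
Proof. by move=> f; apply: thom_eq => p /=; rewrite add0r. Qed.
Lemma taddN (Y Z : tob) :
  left_inverse (@tzero F X L Y Z) (@topp F X L Y Z) (@tadd F X L Y Z).
Proof. by move=> f; apply: thom_eq => p /=; rewrite addNr. Qed.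

HB.instance Definition _ (Y Z : tob) :=
  GRing.isZmodule.Build (hm Y Z) (@taddA Y Z) (@taddC Y Z) (@tadd0 Y Z) (@taddN Y Z).

Lemma commutes_scale (Y Z : pers_obj X L) (c : F) f :
  commutes (Y := Y) (Z := Z) f -> commutes (Y := Y) (Z := Z) (fun p => c *: f p).
Proof.
move=> hf p; move: (hf p); rewrite /square.
by move: (parr Y p) (parr Z p); case: (L p) => a b /= fab; rewrite ccompZl ccompZr fab.
Qed.

Definition tscale (Y Z : tob) (c : F) (f : hm Y Z) : hm Y Z :=
  exist _ _ (commutes_scale c (proj2_sig f)).

Lemma tscaleA (Y Z : tob) a b (v : hm Y Z) : tscale a (tscale b v) = tscale (a * b) v.
Proof. by apply: thom_eq => p /=; rewrite scalerA. Qed.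
Lemma tscale1 (Y Z : tob) : left_id 1 (@tscale Y Z).
Proof. by move=> v; apply: thom_eq => p /=; rewrite scale1r. Qed.
Lemma tscaleDr (Y Z : tob) : right_distributive (@tscale Y Z) +%R.
Proof. by move=> a u v; apply: thom_eq => p /=; rewrite scalerDr. Qed.
Lemma tscaleDl (Y Z : tob) (v : hm Y Z) : {morph (@tscale Y Z)^~ v : a b / a + b}.
Proof. by move=> a b; apply: thom_eq => p /=; rewrite scalerDl. Qed.

HB.instance Definition _ (Y Z : tob) := GRing.Zmodule_isLmodule.Build F (hm Y Z)
  (@tscaleA Y Z) (@tscale1 Y Z) (@tscaleDr Y Z) (@tscaleDl Y Z).

Lemma tcompA (A B C D : tob) (f : hm C D) (g : hm B C) (h : hm A B) :
  tcomp f (tcomp g h) = tcomp (tcomp f g) h.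
Proof. by apply: thom_eq => p /=; rewrite ccompA. Qed.
Lemma tcomp1l (A B : tob) (f : hm A B) : tcomp (tid B) f = f.
Proof. by apply: thom_eq => p /=; rewrite ccomp1m. Qed.
Lemma tcomp1r (A B : tob) (f : hm A B) : tcomp f (tid A) = f.
Proof. by apply: thom_eq => p /=; rewrite ccompm1. Qed.
Lemma tcompDl (A B C : tob) (f g : hm B C) (h : hm A B) :
  tcomp (f + g) h = tcomp f h + tcomp g h.
Proof. by apply: thom_eq => p /=; rewrite ccompDl1. Qed.
Lemma tcompDr (A B C : tob) (h : hm B C) (f g : hm A B) :
  tcomp h (f + g) = tcomp h f + tcomp h g.
Proof. by apply: thom_eq => p /=; rewrite ccompDr1. Qed.
Lemma tcomp0l (A B C : tob) (h : hm A B) : tcomp (0 : hm B C) h = 0.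
Proof. by apply: thom_eq => p /=; rewrite ccomp0l. Qed.
Lemma tcomp0r (A B C : tob) (h : hm B C) : tcomp h (0 : hm A B) = 0.
Proof. by apply: thom_eq => p /=; rewrite ccomp0r. Qed.
Lemma tcompZl (A B C : tob) c (f : hm B C) (h : hm A B) :
  tcomp (c *: f) h = c *: tcomp f h.
Proof. by apply: thom_eq => p /=; rewrite ccompZl. Qed.
Lemma tcompZr (A B C : tob) c (h : hm B C) (f : hm A B) :
  tcomp h (c *: f) = c *: tcomp h f.
Proof. by apply: thom_eq => p /=; rewrite ccompZr. Qed.

Let cancel_split (A B C : tob) (f : hm A B) (g : hm B A) (x : hm C A) :
  tcomp g f = tid A -> tcomp g (tcomp f x) = x.
Proof. by move=> gf; rewrite tcompA gf tcomp1l. Qed.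

Definition endT (Y : tob) := hm Y Y.
HB.instance Definition _ (Y : tob) := GRing.Lmodule.on (endT Y).
HB.instance Definition _ (Y : tob) := GRing.Zmodule_isPzRing.Build (endT Y)
  (@tcompA Y Y Y Y) (@tcomp1l Y Y) (@tcomp1r Y Y)
  (fun f g h => @tcompDl Y Y Y f g h) (fun h f g => @tcompDr Y Y Y h f g).


Lemma endo_eq0_across_iso (Y : tob) (g : endT Y) q :
  arr_is_iso (parr (sval Y) q) -> sval g q = 0 <-> sval g (q - 1) = 0.
Proof.
move: (proj2_sig g q); rewrite /square /arr_is_iso.
move: (parr (sval Y) q); case: (L q) => a /= ga [b [ba ab]]; split => g0.
- by rewrite -[sval g _]ccompm1 -ab ccompA -ga g0 ccomp0r ccomp0l.
- by rewrite -[sval g _]ccomp1m -ba -ccompA ga g0 ccomp0l ccomp0r.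
- by rewrite -[sval g _]ccomp1m -ba -ccompA ga g0 ccomp0l ccomp0r.
- by rewrite -[sval g _]ccompm1 -ab ccompA -ga g0 ccomp0r ccomp0l.
Qed.

Lemma endo_eq0_of_window (Y : tob) (a : int) (n : nat) :
    (forall p, (p <= a) || (a + n%:Z < p) -> arr_is_iso (parr (sval Y) p)) ->
  forall g : endT Y, (forall k : nat, (k <= n)%N -> sval g (a + k%:Z) = 0) -> g = 0.
Proof.
move=> iso_out g g_win; apply: thom_eq => p /=.
have above k : sval g (a + n%:Z + k%:Z) = 0.
  elim: k => [|k IH]; first by rewrite addr0 g_win.
  have iso : arr_is_iso (parr (sval Y) (a + n%:Z + k.+1%:Z)) by apply: iso_out; lia.
  apply/(endo_eq0_across_iso g iso).
  by rewrite (_ : _ - 1 = a + n%:Z + k%:Z) //; lia.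
have below k : sval g (a - k%:Z) = 0.
  elim: k => [|k IH]; first by rewrite subr0 -[a]addr0 g_win.
  have iso : arr_is_iso (parr (sval Y) (a - k%:Z)) by apply: iso_out; lia.
  move/(endo_eq0_across_iso g iso): IH.
  by rewrite (_ : a - k%:Z - 1 = a - k.+1%:Z) //; lia.
have [pa|ap] := ltP p a; first by rewrite (_ : p = a - `|a - p|%N%:Z) ?below //; lia.
have [pan|anp] := leP p (a + n%:Z).
  by rewrite (_ : p = a + `|p - a|%N%:Z) ?g_win //; lia.
by rewrite (_ : p = a + n%:Z + `|(p - a - n%:Z)%R|%N%:Z) ?above //; lia.
Qed.

Fixpoint window_space (Y : int -> cob X) (a : int) (n : nat) : vectType F :=
  if n is n'.+1 then (chom (Y a) (Y a) * window_space Y (a + 1) n')%type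
  else chom (Y a) (Y a).

Fixpoint window_restr (Y : int -> cob X) (f : forall p, chom (Y p) (Y p))
    (a : int) (n : nat) : window_space Y a n :=
  if n is n'.+1 then (f a, window_restr f (a + 1) n') else f a.

Lemma window_restr_eq0 Y f a n : window_restr (Y := Y) f a n = 0 ->
  forall k : nat, (k <= n)%N -> f (a + k%:Z) = 0.
Proof.
elim: n a => [|n IH] a /=; first by move=> f0 [|k] //= _; rewrite addr0.
move=> [fa0 /IH f0] [|k] kn; first by rewrite addr0.
by rewrite (_ : a + k.+1%:Z = a + 1 + k%:Z) ?f0 //; lia.
Qed.

Lemma window_restr_sum Y m (c : 'I_m -> F)
    (f : 'I_m -> forall p, chom (Y p) (Y p)) a n :
  window_restr (Y := Y) (fun p => \sum_i c i *: f i p) a n =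
  \sum_i c i *: window_restr (f i) a n.
Proof.
elim: n a => [|n IH] a //=.
rewrite IH [RHS]surjective_pairing; congr pair.
  by rewrite (big_morph fst (id1 := 0) (op1 := +%R)).
by rewrite (big_morph snd (id1 := 0) (op1 := +%R)).
Qed.

Lemma sval_sum (Y Z : tob) m (v : 'I_m -> hm Y Z) p :
  sval (\sum_i v i) p = \sum_i sval (v i) p.
Proof. by rewrite (big_morph (fun f : hm Y Z => sval f p) (id1 := 0) (op1 := +%R)). Qed.

Lemma seq_int_bounded (s : seq int) : exists M : nat,
  forall x, x \in s -> (- M%:Z <= x) && (x <= M%:Z).
Proof.
elim: s => [|x s [M sM]]; first by exists 0%N.
by exists (M + `|x|)%N => y; rewrite in_cons => /orP[/eqP ->|/sM]; lia.
Qed.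

(* [End Y] embeds linearly into the finite-dimensional space of endomorphisms
   on a window containing all non-invertible arrows. *)
Lemma end_dependence_bounded (Y : tob) : exists D, dependence_bounded (endT Y) D.
Proof.
case: (proj2_sig Y) => s iso_out; have [M sM] := seq_int_bounded s.
pose a := - M%:Z - 1; pose n := (M + M).+1.
have iso_out' p : (p <= a) || (a + n%:Z < p) -> arr_is_iso (parr (sval Y) p).
  by move=> pa; apply: iso_out; apply/negP => /sM; move: pa; rewrite /a /n; lia.
exists (\dim {: window_space (px (sval Y)) a n}) => m w Dm.
pose T := [tuple window_restr (fun p => sval (w i) p) a n | i < m].
have T_dep : ~~ free T.
  apply/negP => /eqP; rewrite size_tuple => dimT.
  by have := dimvS (subvf <<T>>); rewrite dimT; lia.
have [c c_rel] : exists c : 'I_m -> F,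
    \sum_i c i *: T`_i = 0 /\ exists i, c i != 0.
  apply: boolp.contrapT => indep; move/negP: T_dep; apply; apply/freeP => c rel i.
  apply: boolp.contrapT => ci; apply: indep; exists c.
  by split=> //; exists i; exact/eqP.
case: c_rel => rel nz; exists c => //.
apply: (endo_eq0_of_window iso_out') => k kn; rewrite sval_sum.
apply: (window_restr_eq0 (f := fun p => \sum_i c i *: sval (w i) p) _ kn).
rewrite window_restr_sum -[RHS]rel.
by apply: eq_bigr => i _; rewrite (nth_mktuple _ 0).
Qed.

Lemma endM (Y : tob) (f g : endT Y) : f * g = tcomp f g.
Proof. by []. Qed.

Lemma tscaleAl (Y : tob) c (f h : endT Y) :
  tscale c (f * h) = (tscale c f : endT Y) * h.
Proof. exact/esym/tcompZl. Qed.
Lemma tscaleAr (Y : tob) c (f h : endT Y) :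
  tscale c (f * h) = f * (tscale c h : endT Y).
Proof. exact/esym/tcompZr. Qed.

Lemma end_fitting (Y : tob) : fitting_ring (endT Y).
Proof.
have [D depY] := end_dependence_bounded Y.
exact: (@fitting_of_dependence_bounded F (endT Y) (@tscale Y Y) (@tscaleA Y Y)
  (@tscale1 Y Y) (@tscaleDr Y Y) (@tscaleDl Y Y) (@tscaleAl Y) (@tscaleAr Y) D depY).
Qed.

Lemma end_idem_decomposition_bounded (Y : tob) :
  exists D, idem_decomposition_bounded (endT Y) D.
Proof.
have [D depY] := end_dependence_bounded Y; exists D.
exact: (@idem_decomposition_bounded_of_dependence F (endT Y) (@tscale Y Y)
  (@tscaleA Y Y) (@tscale1 Y Y) (@tscaleDr Y Y) (@tscaleDl Y Y) (@tscaleAr Y)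
  D depY).
Qed.

Definition idem_split (Y A : tob) (e : endT Y) (i : hm A Y) (p : hm Y A) : Prop :=
  tcomp p i = tid A /\ tcomp i p = e.

Lemma split_idempotent : has_kernels X ->
  forall (Y : tob) (e : endT Y), idempotent e ->
  exists (A : tob) (i : hm A Y) (p : hm Y A), idem_split e i p.
Proof.
move=> kerX Y e ee.
have split_at q : exists t : {K : cob X & (chom K (px (sval Y) q) * chom _ K)%type},
    ccomp (projT2 t).2 (projT2 t).1 = cid _ /\
    ccomp (projT2 t).1 (projT2 t).2 = sval e q.
  have eeq : ccomp (sval e q) (sval e q) = sval e q by rewrite -{3}ee.
  have [K [k [r kr]]] := split_idempotent_of_kernel kerX eeq.
  by exists (existT _ K (k, r)).
have rk q := (svalP (boolp.cid (split_at q))).1.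
have kr q := (svalP (boolp.cid (split_at q))).2.
pose A : tob := exist _ _ (retract_tempered (proj2_sig e) rk kr (proj2_sig Y)).
exists A, (exist _ _ (commutes_retract_incl (proj2_sig e) rk kr) : hm A Y).
exists (exist _ _ (commutes_retract_proj (proj2_sig e) rk kr) : hm Y A).
by split; apply: thom_eq => q /=; rewrite ?rk ?kr.
Qed.

Lemma is_zero_obP (Z : tob) : @is_zero_ob TC Z <-> tid Z = 0.
Proof.
split=> [/(_ Z) [] //|Z0 B].
have fromZ (h : hm Z B) : h = 0 by rewrite -[h]tcomp1r Z0 tcomp0r.
have toZ (h : hm B Z) : h = 0 by rewrite -[h]tcomp1l Z0 tcomp0l.
by split=> f g; rewrite (fromZ f) (fromZ g) || rewrite (toZ f) (toZ g).
Qed.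

Lemma idem_split_eq0 (Y A : tob) (e : endT Y) (i : hm A Y) (p : hm Y A) :
  idem_split e i p -> e = 0 <-> @is_zero_ob TC A.
Proof.
move=> [pi <-]; rewrite is_zero_obP; split=> [ip0|A0].
  have -> : tid A = tcomp p (tcomp (tcomp i p) i).
    by rewrite -tcompA (cancel_split _ pi) pi.
  by rewrite ip0 tcomp0l tcomp0r.
by rewrite -[p]tcomp1l A0 tcomp0l tcomp0r.
Qed.

Lemma isomorphic_refl (Y : tob) : @isomorphic TC Y Y.
Proof. by exists (tid Y), (tid Y); split; apply: tcomp1l. Qed.

Lemma idempotent_of_split (Y A : tob) (e : endT Y) (i : hm A Y) (p : hm Y A) :
  idem_split e i p -> idempotent e.
Proof. by move=> [pi <-]; rewrite /idempotent endM -tcompA (cancel_split _ pi). Qed.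

Lemma idem_split_orth (Y A B : tob) (e e' : endT Y) (i : hm A Y) (p : hm Y A)
    (i' : hm B Y) (p' : hm Y B) :
  idem_split e i p -> idem_split e' i' p' -> e * e' = 0 -> tcomp p i' = 0.
Proof.
move=> [pi ip] [pi' ip'] ee'.
have -> : tcomp p i' = tcomp p (tcomp (tcomp i p) (tcomp (tcomp i' p') i')).
  by rewrite -!tcompA (cancel_split _ pi) pi' tcomp1r.
by rewrite ip ip' [tcomp e _]tcompA -endM ee' tcomp0l tcomp0r.
Qed.

(* A nontrivial idempotent [e] and [1 - e] split off complementary summands. *)
Lemma indecomposable_idem_trivial : has_kernels X -> forall Y : tob,
  @indecomposable TC Y -> forall e : endT Y, idempotent e -> e = 0 \/ e = 1.
Proof.
move=> kerX Y [Y_neq0 Y_indec] e ee.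
have [e0|e0] := boolp.pselect (e = 0); first by left.
have [e1|e1] := boolp.pselect (e = 1); first by right.
have ee' : idempotent (1 - e).
  by rewrite /idempotent mulrBl mul1r mulrBr mulr1 ee subrr subr0.
have [A [i1 [p1 s1]]] := split_idempotent kerX ee.
have [B [i2 [p2 s2]]] := split_idempotent kerX ee'.
exfalso; apply: Y_indec; exists A, B, Y; split.
- by move/(idem_split_eq0 s1).
- by move/(idem_split_eq0 s2) => /subr0_eq /esym.
- exists i1, i2, p1, p2; split; [exact: s1.1 | exact: s2.1 | | |].
  + by apply: idem_split_orth s1 s2 _; rewrite mulrBr mulr1 ee subrr.
  + by apply: idem_split_orth s2 s1 _; rewrite mulrBl mul1r ee subrr.
  + change (tcomp i1 p1 + tcomp i2 p2 = 1 :> endT Y).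
    by rewrite s1.2 s2.2 addrC subrK.
- exact: isomorphic_refl.
Qed.

Lemma indecomposable_of_primitive (Y A : tob) (e : endT Y) (i : hm A Y) (p : hm Y A) :
  idem_split e i p -> e <> 0 -> primitive e -> @indecomposable TC A.
Proof.
move=> e_split e0 e_prim; have [pi ip] := e_split.
split; first by move/(idem_split_eq0 e_split).
move=> [B [C [Y' [B_neq0 C_neq0 biprod [h [h' [hh1 hh2]]]]]]].
case: biprod => [j1 [j2 [q1 [q2 [h1 h2 h3 h4 h5]]]]].
rewrite /= in h1 h2 h3 h4 h5 hh1 hh2.
pose i1 := tcomp i (tcomp h' j1); pose p1 := tcomp q1 (tcomp h p).
pose i2 := tcomp i (tcomp h' j2); pose p2 := tcomp q2 (tcomp h p).
have through_A (D E : tob) (u : hm Y' E) (v : hm D Y') :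
    tcomp (tcomp u (tcomp h p)) (tcomp i (tcomp h' v)) = tcomp u v.
  by rewrite -!tcompA !(cancel_split _ pi, cancel_split _ hh2).
have s1 : idem_split (tcomp i1 p1) i1 p1 by split; rewrite // through_A.
have s2 : idem_split (tcomp i2 p2) i2 p2 by split; rewrite // through_A.
have orth (D E : tob) (x : hm D Y) (u : hm Y D) (v : hm E Y) (y : hm Y E) :
    tcomp u v = 0 -> (tcomp x u : endT Y) * tcomp v y = 0.
  by move=> uv; rewrite endM -tcompA [tcomp u _]tcompA uv tcomp0l tcomp0r.
have e_sum : tcomp i1 p1 + tcomp i2 p2 = e.
  rewrite -ip -[p]tcomp1l -hh1 -tcompA -[tcomp h p]tcomp1l -h5.
  by rewrite !tcompDl !tcompDr -!tcompA.
have o12 : tcomp p1 i2 = 0 by rewrite through_A h3.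
have o21 : tcomp p2 i1 = 0 by rewrite through_A h4.
have [] := e_prim _ _ (idempotent_of_split s1) (idempotent_of_split s2)
  (orth _ _ i1 _ _ p2 o12) (orth _ _ i2 _ _ p1 o21) e_sum.
- by move/(idem_split_eq0 s1).
- by move/(idem_split_eq0 s2).
Qed.

Lemma direct_sum_of_idem_decomposition (Y : tob) m (e : 'I_m -> endT Y)
    (A : 'I_m -> tob) (incl : forall k, hm (A k) Y) (proj : forall k, hm Y (A k)) :
  idem_decomposition e -> (forall k, idem_split (e k) (incl k) (proj k)) ->
  @is_direct_sum TC m A Y.
Proof.
move=> [_ _ e_orth e_sum] e_split; exists incl, proj; split.
- by move=> k; case: (e_split k).
- by move=> j k /e_orth; apply: idem_split_orth.
- change (\sum_(k < m) tcomp (incl k) (proj k) = 1 :> endT Y).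
  by rewrite -e_sum; apply: eq_bigr => k _; case: (e_split k).
Qed.

Lemma exists_indecomposable_decomposition : has_kernels X -> forall Y : tob,
  exists n (A : 'I_n -> tob), (forall k, @indecomposable TC (A k)) /\
    exists Y', @is_direct_sum TC n A Y' /\ @isomorphic TC Y Y'.
Proof.
move=> kerX Y.
have [Y0|Y_neq0] := boolp.pselect (tid Y = 0).
  exists 0%N, (fun=> Y); split; first by case.
  exists Y; split; last exact: isomorphic_refl.
  by exists (fun=> tid Y), (fun=> tid Y); split; [case | case | rewrite big_ord0].
have [D boundD] := end_idem_decomposition_bounded Y.
have [m [e [e_dec e_prim]]] := exists_primitive_decomposition boundD Y_neq0.
have [e_idem e_neq0 _ _] := e_dec.
have split_k k : exists t : {A : tob & (hm A Y * hm Y A)%type},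
    idem_split (e k) (projT2 t).1 (projT2 t).2.
  have [A [i [p ip]]] := split_idempotent kerX (e_idem k).
  by exists (existT _ A (i, p)).
have [t t_split] := boolp.choice split_k.
exists m, (fun k => projT1 (t k)); split.
  by move=> k; apply: indecomposable_of_primitive (t_split k) (e_neq0 k) (e_prim k).
exists Y; split; last exact: isomorphic_refl.
exact: direct_sum_of_idem_decomposition e_dec t_split.
Qed.

End TemperedCategory.

Theorem proposition5p2 (F : fieldType) (X : LinCat F) (L : int -> bool) :
  abelian X -> KrullSchmidt (tempered_pers_cat X L).
Proof.
move=> [_ [_ kerX _ _ _]]; split; first exact: exists_indecomposable_decomposition.
move=> Y Y_indec; split.
  by move=> Y0; apply: Y_indec.1; apply/is_zero_obP.
exact: local_of_trivial_idempotents (end_fitting (Y := Y))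
  (indecomposable_idem_trivial kerX Y_indec).
Qed.
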